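(* Let $m_1,m_2\ge 0$ be integers and $\lambda=m_1\omega_1+m_2\omega_2$. Then in the representation ring of $\mathfrak{sl}_3$, \begin{align*} \psi_2(V_{\lambda}) &= \sum_{l=0}^{\min\{m_1,m_2\}}\sum_{k=0}^{m_1-l}(-1)^k\, V_{2\lambda-k\alpha_1-2l(\alpha_1+\alpha_2)} + \sum_{l=0}^{\min\{m_1,m_2\}}\sum_{k=0}^{m_2-l}(-1)^k\, V_{2\lambda-k\alpha_2-2l(\alpha_1+\alpha_2)} \\ &\quad - \sum_{l=0}^{\min\{m_1,m_2\}} V_{2\lambda-2l(\alpha_1+\alpha_2)}. \end{align*} Equivalently, writing $V_{a,b}=V_{a\omega_1+b\omega_2}$, the three sums are over $V_{2m_1-2k-2l,\,2m_2+k-2l}$, $V_{2m_1+k-2l,\,2m_2-2k-2l}$ and $V_{2m_1-2l,\,2m_2-2l}$ respectively.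
   Context: $\mathfrak{sl}_3$ has simple roots $\alpha_1=(1,-1,0)$, $\alpha_2=(0,1,-1)$ and fundamental weights $\omega_1=\frac13(2\alpha_1+\alpha_2)$, $\omega_2=\frac13(\alpha_1+2\alpha_2)$ (so $\alpha_1=2\omega_1-\omega_2$, $\alpha_2=-\omega_1+2\omega_2$). $V_\mu$ denotes the irreducible representation with dominant highest weight $\mu$. $\psi_2$ is the second Adams operation on the representation ring (virtual representations), i.e. the ring endomorphism characterized on characters by $\mathrm{ch}(\psi_2 V)(t)=\mathrm{ch}(V)(t^2)$ for $t$ in the maximal torus; equivalently, on characters viewed as symmetric functions in $x_1,x_2,x_3$ with $x_1x_2x_3=1$, it sends $f(x_1,x_2,x_3)$ to $f(x_1^2,x_2^2,x_3^2)$. *)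

From HB Require Import structures.
From mathcomp Require Import all_boot all_order all_algebra.
Set Implicit Arguments. Unset Strict Implicit. Unset Printing Implicit Defensive.
Import Order.TTheory GRing.Theory Num.Theory.

(* Weights of sl_3 are written in fundamental-weight coordinates:
   (a, b) : int * int stands for a*omega_1 + b*omega_2.
   A (virtual) character, i.e. an element of the representation ring
   (identified with the character ring Z[P]^W), is represented by its
   weight-multiplicity function  P -> int  (finitely supported). *)

Definition vchar := (int * int)%type -> int.

(* Weight of the monomial x1^e1 x2^e2 x3^e3 (with x1 x2 x3 = 1):
   e1 eps_1 + e2 eps_2 + e3 eps_3 = (e1 - e2) omega_1 + (e2 - e3) omega_2. *)
Definition mono_wt (e1 e2 e3 : nat) : int * int :=
  ((Posz e1 - Posz e2)%R, (Posz e2 - Posz e3)%R).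

(* Multiset of weights of V_{a omega_1 + b omega_2}, enumerated by
   Gelfand-Tsetlin patterns with top row (a+b, b, 0):
     a+b >= p1 >= b >= p2 >= 0,  p1 >= q >= p2,
   the pattern contributing the monomial x1^q x2^(p1+p2-q) x3^(a+2b-p1-p2).
   (Equivalently ch V_{a,b} is the Schur polynomial s_{(a+b,b,0)}(x1,x2,x3).) *)
Definition gt_weights (a b : nat) : seq (int * int) :=
  flatten [seq flatten [seq [seq mono_wt q (p1 + p2 - q) (a + 2 * b - p1 - p2)
                               | q <- iota p2 (p1 - p2).+1]
                          | p2 <- iota 0 b.+1]
          | p1 <- iota b a.+1].

Definition chV (a b : nat) : vchar :=
  fun mu => Posz (count (pred1 mu) (gt_weights a b)).

(* Second Adams operation: the ring endomorphism e^mu |-> e^(2 mu) of Z[P],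
   i.e. f(x1,x2,x3) |-> f(x1^2,x2^2,x3^2). *)
Definition psi2 (f : vchar) : vchar :=
  fun mu => if ((2 %| mu.1)%Z && (2 %| mu.2)%Z)
            then f ((mu.1 %/ 2)%Z, (mu.2 %/ 2)%Z) else 0%R.

(* Multiply both sides by the doubled Weyl denominator A_{2ρ} = Σ_w sgn(w) e^{2wρ}.
   Since A_{2ρ} = ψ2(A_ρ), the Weyl character formula A_ρ ch V_λ = A_{λ+ρ} gives
   A_{2ρ} ψ2(ch V_λ) = ψ2(A_{λ+ρ}) = A_{2λ+2ρ}.  On the other side
   A_{2ρ} = A_ρ ch V_ρ, so A_{2ρ} ch V_μ = Σ_{t ∈ wt(V_ρ)} A_{μ+ρ+t}.  Pairing the
   weights of V_ρ along an α_i-string, the alternating sum over k telescopes to the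
   two end terms; one end lies on a wall of the Weyl chamber and vanishes, so the
   l-th summand contributes A_{c+ρ} - A_{c-ρ} with c = 2(λ - l(ω1+ω2)) + ρ, and these
   telescope in l to A_{2λ+2ρ}.  Finally, multiplication by A_{2ρ} is injective on
   functions whose support is bounded in height, because e^{2ρ} is its unique
   highest term. *)

From HB Require Import structures.
From mathcomp Require Import all_boot all_order all_algebra.
From mathcomp Require Import zify ring.
Import Order.TTheory GRing.Theory Num.Theory.
Local Open Scope ring_scope.

Notation weight := (int * int)%type.

Definition ind (b : bool) : int := if b then 1 else 0.

Lemma weightP (v v' : weight) : v.1 = v'.1 -> v.2 = v'.2 -> v = v'.
Proof. by case: v v' => [? ?] [? ?] /= -> ->. Qed.

Lemma weight_natmul (d : weight) n : d *+ n = (d.1 *+ n, d.2 *+ n).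
Proof. by elim: n => // n IH; rewrite !mulrS IH. Qed.

Lemma sum_ind_count (T : eqType) (s : seq T) (x : T) :
  \sum_(y <- s) ind (y == x) = Posz (count (pred1 x) s).
Proof.
elim: s => [|y s IH]; first by rewrite big_nil.
by rewrite big_cons /= PoszD IH /ind; case: (y == x).
Qed.

(** * Multiplication by finitely supported elements of Z[P] *)

(* [a : fsum] stands for Σ_(c, t) ∈ a  c e^t, acting on characters by
   multiplication: the coefficient of e^mu in e^t f is f (mu - t). *)
Definition fsum := seq (int * weight).

Definition fsmul (a : fsum) (f : vchar) : vchar :=
  fun mu => \sum_(p <- a) p.1 * f (mu - p.2).

Lemma eq_fsmul a f g : f =1 g -> fsmul a f =1 fsmul a g.
Proof. by move=> fg mu; apply: eq_bigr => p _; rewrite fg. Qed.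

Lemma fsmul_sum (T : Type) a (r : seq T) (G : T -> vchar) mu :
  fsmul a (fun nu => \sum_(i <- r) G i nu) mu = \sum_(i <- r) fsmul a (G i) mu.
Proof. by rewrite /fsmul exchange_big; apply: eq_bigr => p _; rewrite mulr_sumr. Qed.

Lemma fsmulD a f g mu :
  fsmul a (fun nu => f nu + g nu) mu = fsmul a f mu + fsmul a g mu.
Proof. by rewrite /fsmul -big_split; apply: eq_bigr => p _; rewrite mulrDr. Qed.

Lemma fsmulB a f g mu :
  fsmul a (fun nu => f nu - g nu) mu = fsmul a f mu - fsmul a g mu.
Proof. by rewrite /fsmul -sumrB; apply: eq_bigr => p _; rewrite mulrBr. Qed.

Lemma fsmulZ a c f mu : fsmul a (fun nu => c * f nu) mu = c * fsmul a f mu.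
Proof. by rewrite /fsmul mulr_sumr; apply: eq_bigr => p _; rewrite mulrCA. Qed.

Definition fsconv (T : seq weight) (a : fsum) : fsum :=
  flatten [seq [seq (p.1, p.2 + t) | p <- a] | t <- T].

Lemma fsmul_fsconv T a f mu :
  fsmul (fsconv T a) f mu = \sum_(t <- T) fsmul a f (mu - t).
Proof.
rewrite /fsmul /fsconv big_flatten big_map; apply: eq_bigr => t _.
by rewrite big_map; apply: eq_bigr => p _; rewrite opprD addrA addrAC.
Qed.

Definition fscoef (a : fsum) (d : weight) : int :=
  foldr (fun p c => p.1 * ind (p.2 == d) + c) 0 a.

Lemma fsmul_fscoef a (D : seq weight) f mu : uniq D -> all (fun p => p.2 \in D) a ->
  fsmul a f mu = \sum_(d <- D) fscoef a d * f (mu - d).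
Proof.
move=> uniqD; elim: a => [|p a IH] /=.
  by move=> _; rewrite /fsmul big_nil big1 // => d _; rewrite mul0r.
move=> /andP [pD aD]; rewrite /fsmul big_cons -/(fsmul a f mu) IH //.
under [RHS]eq_bigr do rewrite mulrDl.
rewrite big_split /=; congr (_ + _).
rewrite (bigD1_seq p.2) //= eqxx /ind mulr1 big1 ?addr0 // => d.
by rewrite eq_sym => /negbTE ->; rewrite mulr0 mul0r.
Qed.

Lemma eq_fsmul_fscoef a b f :
  all (fun d => fscoef a d == fscoef b d) (undup (map snd (a ++ b))) ->
  fsmul a f =1 fsmul b f.
Proof.
move=> /allP eq_coef mu; pose D := undup (map snd (a ++ b)).
have suppD c : {subset c <= a ++ b} -> all (fun p => p.2 \in D) c.
  by move=> sub_c; apply/allP => p /sub_c pc; rewrite mem_undup map_f.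
have Da : all (fun p => p.2 \in D) a by apply: suppD => p; rewrite mem_cat => ->.
have Db : all (fun p => p.2 \in D) b by apply: suppD => p; rewrite mem_cat orbC => ->.
rewrite (fsmul_fscoef _ _ _ _ (undup_uniq _) Da) (fsmul_fscoef _ _ _ _ (undup_uniq _) Db).
by rewrite !big_seq; apply: eq_bigr => d /eq_coef /eqP ->.
Qed.

Definition fsdouble (a : fsum) : fsum := [seq (p.1, p.2 *+ 2) | p <- a].

(** * The Weyl group and alternants *)

Definition s1 (v : weight) : weight := (- v.1, v.1 + v.2).
Definition s2 (v : weight) : weight := (v.1 + v.2, - v.2).
Definition w0 (v : weight) : weight := (- v.2, - v.1).

Lemma s1_zmod_morphism : zmod_morphism s1.
Proof. by case=> ? ? [? ?]; apply: weightP => /=; ring. Qed.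
HB.instance Definition _ := GRing.isZmodMorphism.Build weight weight s1 s1_zmod_morphism.

Lemma s2_zmod_morphism : zmod_morphism s2.
Proof. by case=> ? ? [? ?]; apply: weightP => /=; ring. Qed.
HB.instance Definition _ := GRing.isZmodMorphism.Build weight weight s2 s2_zmod_morphism.

Lemma w0_zmod_morphism : zmod_morphism w0.
Proof. by case=> ? ? [? ?]; apply: weightP => /=; ring. Qed.
HB.instance Definition _ := GRing.isZmodMorphism.Build weight weight w0 w0_zmod_morphism.

Definition weyl_signed : seq (int * {additive weight -> weight}) :=
  [:: (1, GRing.Additive.clone _ _ idfun _); (-1, GRing.Additive.clone _ _ s1 _);
      (-1, GRing.Additive.clone _ _ s2 _); (1, GRing.Additive.clone _ _ (s1 \o s2) _);
      (1, GRing.Additive.clone _ _ (s2 \o s1) _); (-1, GRing.Additive.clone _ _ w0 _)].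

Definition alt (v : weight) : vchar :=
  fun mu => \sum_(w <- weyl_signed) w.1 * ind (mu == w.2 v).

Lemma altE v mu : alt v mu =
  ind (mu == v) - ind (mu == s1 v) - ind (mu == s2 v)
  + ind (mu == s1 (s2 v)) + ind (mu == s2 (s1 v)) - ind (mu == w0 v).
Proof. by rewrite /alt /weyl_signed !big_cons big_nil /=; ring. Qed.

Lemma s1K : involutive s1.
Proof. by case=> ? ?; apply: weightP => /=; ring. Qed.

Lemma s2K : involutive s2.
Proof. by case=> ? ?; apply: weightP => /=; ring. Qed.

Lemma s1s2s1 v : s1 (s2 (s1 v)) = w0 v.
Proof. by case: v => ? ?; apply: weightP => /=; ring. Qed.

Lemma s2s1s2 v : s2 (s1 (s2 v)) = w0 v.
Proof. by case: v => ? ?; apply: weightP => /=; ring. Qed.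

Lemma w0s1 v : w0 (s1 v) = s1 (s2 v).
Proof. by case: v => ? ?; apply: weightP => /=; ring. Qed.

Lemma w0s2 v : w0 (s2 v) = s2 (s1 v).
Proof. by case: v => ? ?; apply: weightP => /=; ring. Qed.

Lemma alt_s1 v mu : alt (s1 v) mu = - alt v mu.
Proof. by rewrite !altE s1K s1s2s1 w0s1; ring. Qed.

Lemma alt_s2 v mu : alt (s2 v) mu = - alt v mu.
Proof. by rewrite !altE s2K s2s1s2 w0s2; ring. Qed.

Lemma alt_wall1 v mu : v.1 = 0 -> alt v mu = 0.
Proof.
case: v => _ y /= ->.
have fix1 : s1 (0, y) = (0, y) by rewrite /s1 /= oppr0 add0r.
have := alt_s1 (0, y) mu; rewrite fix1 => /eqP.
by rewrite -subr_eq0 opprK -mulr2n mulrn_eq0 => /eqP.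
Qed.

Lemma alt_wall2 v mu : v.2 = 0 -> alt v mu = 0.
Proof.
case: v => x _ /= ->.
have fix2 : s2 (x, 0) = (x, 0) by rewrite /s2 /= oppr0 addr0.
have := alt_s2 (x, 0) mu; rewrite fix2 => /eqP.
by rewrite -subr_eq0 opprK -mulr2n mulrn_eq0 => /eqP.
Qed.

(** * The Weyl character formula *)

Definition monomial (i j k : nat) : vchar := fun mu => ind (mono_wt i j k == mu).

Lemma monomial_shift i j k i' j' k' (d mu : weight) :
  mono_wt i j k + d = mono_wt i' j' k' -> monomial i j k (mu - d) = monomial i' j' k' mu.
Proof. by move=> e; rewrite /monomial eq_sym subr_eq eq_sym e. Qed.

(* The Weyl denominator A_ρ, ρ = (1, 1); as a polynomial in x1, x2, x3 (with
   x1 x2 x3 = 1) it is the Vandermonde product (x1 - x2)(x1 - x3)(x2 - x3). *)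
Definition rho_alt : fsum :=
  [:: (1, (1, 1)); (-1, (-1, 2)); (-1, (2, -1)); (1, (-2, 1)); (1, (1, -2)); (-1, (-1, -1))].

(* [vdm i j k] is x1^i x2^j x3^k (x1 - x3)(x2 - x3). *)
Definition vdm (i j k : nat) : vchar := fun mu =>
  monomial i.+1 j.+1 k mu - monomial i.+1 j k.+1 mu - monomial i j.+1 k.+1 mu
  + monomial i j k.+2 mu.

Lemma fsmul_rho_monomial i j k mu :
  fsmul rho_alt (monomial i j k) mu = vdm i.+1 j k mu - vdm i j.+1 k mu.
Proof.
rewrite /fsmul /rho_alt !big_cons big_nil.
rewrite (@monomial_shift i j k i.+2 j.+1 k); last by apply: weightP => /=; lia.
rewrite (@monomial_shift i j k i.+1 j.+2 k); last by apply: weightP => /=; lia.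
rewrite (@monomial_shift i j k i.+2 j k.+1); last by apply: weightP => /=; lia.
rewrite (@monomial_shift i j k i j.+2 k.+1); last by apply: weightP => /=; lia.
rewrite (@monomial_shift i j k i.+1 j k.+2); last by apply: weightP => /=; lia.
rewrite (@monomial_shift i j k i j.+1 k.+2); last by apply: weightP => /=; lia.
by rewrite /vdm /=; ring.
Qed.

Lemma chV_monomials a b mu : chV a b mu =
  \sum_(p1 <- iota b a.+1) \sum_(p2 <- iota 0 b.+1) \sum_(q <- iota p2 (p1 - p2).+1)
     monomial q (p1 + p2 - q) (a + 2 * b - p1 - p2) mu.
Proof.
rewrite /chV -sum_ind_count /gt_weights !big_flatten big_map.
apply: eq_bigr => p1 _; rewrite big_flatten big_map.
by apply: eq_bigr => p2 _; rewrite big_map.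
Qed.

Lemma telescope_iota (F u : nat -> int) m n :
  (forall k, (m <= k < m + n)%N -> u k = F k.+1 - F k) ->
  \sum_(k <- iota m n) u k = F (m + n)%N - F m.
Proof.
move=> uF; rewrite -{1}(addKn m n) -/(index_iota m (m + n)).
exact: telescope_sumr_eq (leq_addr n m) uF.
Qed.

Lemma telescope_iota2 (F : nat -> nat -> int) m n m' n' :
  \sum_(i <- iota m n) \sum_(j <- iota m' n')
     (F i.+1 j.+1 - F i.+1 j - F i j.+1 + F i j) =
  F (m + n)%N (m' + n')%N - F (m + n)%N m' - F m (m' + n')%N + F m m'.
Proof.
rewrite (@telescope_iota (fun i => F i (m' + n')%N - F i m')); first by ring.
move=> i _; rewrite (@telescope_iota (fun j => F i.+1 j - F i j)); first by ring.
by move=> j _; ring.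
Qed.

Lemma fsmul_rho_gt_row mu (a b p1 p2 : nat) : (b <= p1)%N -> (p2 <= b)%N ->
  \sum_(q <- iota p2 (p1 - p2).+1)
     fsmul rho_alt (monomial q (p1 + p2 - q) (a + 2 * b - p1 - p2)) mu =
  vdm p1.+1 p2 (a + 2 * b - p1 - p2) mu - vdm p2 p1.+1 (a + 2 * b - p1 - p2) mu.
Proof.
move=> bp1 p2b.
rewrite (@telescope_iota (fun q => vdm q ((p1 + p2).+1 - q)%N (a + 2 * b - p1 - p2)%N mu)).
  by congr (vdm _ _ _ _ - vdm _ _ _ _); lia.
by move=> q hq; rewrite fsmul_rho_monomial; congr (vdm _ _ _ _ - vdm _ _ _ _); lia.
Qed.

Theorem weyl_character_formula a b mu :
  fsmul rho_alt (chV a b) mu = alt (Posz a + 1, Posz b + 1) mu.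
Proof.
pose K i j := monomial i j (a + 2 * b + 3 - i - j) mu.
pose Phi i j := K i.+1 j - K j i.+1.
have vdmK i j k : (i + j + k = a + 2 * b + 1)%N ->
    vdm i j k mu = K i.+1 j.+1 - K i.+1 j - K i j.+1 + K i j.
  move=> e; rewrite /vdm /K.
  by congr (monomial _ _ _ _ - monomial _ _ _ _ - monomial _ _ _ _ + monomial _ _ _ _); lia.
rewrite (eq_fsmul _ _ _ (chV_monomials a b)) fsmul_sum.
transitivity (\sum_(p1 <- iota b a.+1) \sum_(p2 <- iota 0 b.+1)
    (Phi p1.+1 p2.+1 - Phi p1.+1 p2 - Phi p1 p2.+1 + Phi p1 p2)).
  rewrite !big_seq; apply: eq_bigr => p1; rewrite mem_iota => /andP [bp1 p1ab].
  rewrite fsmul_sum !big_seq; apply: eq_bigr => p2; rewrite mem_iota => /andP [_ p2b].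
  rewrite fsmul_sum fsmul_rho_gt_row //.
  by rewrite !vdmK /Phi; [ring | lia..].
have indE i j k w : mono_wt i j k = w -> ind (mono_wt i j k == mu) = ind (mu == w).
  by move=> <-; rewrite eq_sym.
set v := (Posz a + 1, Posz b + 1).
rewrite telescope_iota2 /Phi /K /monomial altE !add0n subrr.
rewrite (indE _ _ _ v) 1?(indE _ _ _ (s1 v)) 1?(indE _ _ _ (s2 v))
  1?(indE _ _ _ (s1 (s2 v))) 1?(indE _ _ _ (s2 (s1 v))) 1?(indE _ _ _ (w0 v)); first ring.
all: by apply: weightP; rewrite /= /v /s1 /s2 /w0 /=; lia.
Qed.

Lemma chV_supp a b (mu : weight) : Posz a + Posz b < mu.1 + mu.2 -> chV a b mu = 0.
Proof.
move=> high; rewrite chV_monomials.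
apply: big1_seq => p1; rewrite mem_iota => /andP [_ /andP [_ p1_lt]].
apply: big1_seq => p2; rewrite mem_iota => /andP [_ /andP [_ p2_lt]].
apply: big1_seq => q; rewrite mem_iota => /andP [_ /andP [q_ge q_lt]].
rewrite /monomial /ind; case: eqP => // wt_mu.
by move: high; rewrite -wt_mu /mono_wt /=; lia.
Qed.

(** * The Adams operation *)

Lemma dvdz2_subMn (x y : int) : (2 %| x - y *+ 2)%Z = (2 %| x)%Z.
Proof. by rewrite rpredBr //; apply/dvdzP; exists y; rewrite mulr2n; lia. Qed.

Lemma divz2_subMn (x y : int) : (2 %| x)%Z -> ((x - y *+ 2) %/ 2)%Z = (x %/ 2)%Z - y.
Proof.
move=> /dvdzP [k ->]; rewrite (_ : k * 2 - y *+ 2 = (k - y) * 2) ?mulzK //.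
by rewrite mulr2n; lia.
Qed.

Lemma psi2_subMn f (mu d : weight) : psi2 f (mu - d *+ 2) =
  if (2 %| mu.1)%Z && (2 %| mu.2)%Z then f (((mu.1 %/ 2)%Z, (mu.2 %/ 2)%Z) - d) else 0.
Proof.
rewrite /psi2 (_ : mu - d *+ 2 = (mu.1 - d.1 *+ 2, mu.2 - d.2 *+ 2)) //= !dvdz2_subMn.
by case: ifP => // /andP [ev1 ev2]; rewrite !divz2_subMn.
Qed.

Lemma fsmul_psi2 a f mu : fsmul (fsdouble a) (psi2 f) mu = psi2 (fsmul a f) mu.
Proof.
rewrite /fsmul big_map; under eq_bigr do rewrite psi2_subMn.
rewrite /psi2; case: ifP => // _.
by rewrite big1 // => p _; rewrite mulr0.
Qed.

Lemma ind_eq_double (mu x : weight) : ind (mu == x *+ 2) =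
  if (2 %| mu.1)%Z && (2 %| mu.2)%Z then ind (((mu.1 %/ 2)%Z, (mu.2 %/ 2)%Z) == x) else 0.
Proof.
case: mu x => m1 m2 [x1 x2] /=.
rewrite (_ : (x1, x2) *+ 2 = (x1 *+ 2, x2 *+ 2)) // !xpair_eqE !mulr2n.
case: ifP => [/andP [/dvdzP [k1 ->] /dvdzP [k2 ->]] | odd_m].
  rewrite !mulzK //; congr ind.
  by apply/andP/andP => -[/eqP e1 /eqP e2]; split; apply/eqP; lia.
have even_double (x : int) : (2 %| x + x)%Z by apply/dvdzP; exists x; lia.
case: (m1 =P _) => [e1|] //; case: (m2 =P _) => [e2|] //.
by rewrite e1 e2 !even_double in odd_m.
Qed.

Lemma psi2_alt v mu : psi2 (alt v) mu = alt (v *+ 2) mu.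
Proof.
rewrite /psi2 /alt; under [RHS]eq_bigr do rewrite raddfMn ind_eq_double.
by case: ifP => // _; rewrite big1 // => w _; rewrite mulr0.
Qed.

Lemma psi2_supp f (N : int) (mu : weight) :
  (forall nu : weight, N < nu.1 + nu.2 -> f nu = 0) -> 2 * N < mu.1 + mu.2 ->
  psi2 f mu = 0.
Proof.
move=> f_supp high; rewrite /psi2.
case: ifP => // /andP [/dvdzP [k1 e1] /dvdzP [k2 e2]].
by apply: f_supp; move: high; rewrite /= e1 e2 !mulzK //; lia.
Qed.

Definition rho2_alt : fsum := fsdouble rho_alt.

(* The weights of the adjoint representation V_ρ. *)
Definition adj_weights : seq weight :=
  [:: (0, 0); (0, 0); (2, -1); (-2, 1); (-1, 2); (1, -2); (1, 1); (-1, -1)].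

Lemma adj_weights_weyl_invariant :
  all (fun w : int * {additive weight -> weight} =>
         perm_eq adj_weights (map w.2 adj_weights)) weyl_signed.
Proof. by vm_compute. Qed.

Lemma alt_adj_shift v mu :
  \sum_(t <- adj_weights) alt v (mu - t) = \sum_(t <- adj_weights) alt (v + t) mu.
Proof.
rewrite /alt exchange_big [RHS]exchange_big.
elim: weyl_signed adj_weights_weyl_invariant => [_|w W IH /andP [perm_w perm_W]].
  by rewrite !big_nil.
rewrite big_cons [RHS]big_cons IH // -!mulr_sumr (perm_big _ perm_w) big_map.
by congr (_ * _ + _); apply: eq_bigr => t _; rewrite raddfD -subr_eq.
Qed.

(* A_{2ρ} = A_ρ ch V_ρ, checked coefficientwise. *)
Lemma fsmul_rho2 f mu :
  fsmul rho2_alt f mu = \sum_(t <- adj_weights) fsmul rho_alt f (mu - t).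
Proof. by rewrite -fsmul_fsconv; apply: eq_fsmul_fscoef; vm_compute. Qed.

Definition adj_alt (v : weight) : vchar :=
  fun mu => \sum_(t <- adj_weights) alt (v + t) mu.

Lemma fsmul_rho2_chV a b mu :
  fsmul rho2_alt (chV a b) mu = adj_alt (Posz a + 1, Posz b + 1) mu.
Proof.
rewrite fsmul_rho2; under eq_bigr do rewrite weyl_character_formula.
exact: alt_adj_shift.
Qed.

Lemma fsmul_rho2_psi2_chV a b mu :
  fsmul rho2_alt (psi2 (chV a b)) mu = alt ((Posz a + 1, Posz b + 1) *+ 2) mu.
Proof. by rewrite fsmul_psi2 -psi2_alt /psi2 weyl_character_formula. Qed.

(* e^{2ρ} is the highest term of A_{2ρ}: all other terms e^{2wρ} are lower by at
   least 2 in height, which gives a downward induction on the height. *)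
Lemma fsmul_rho2_eq0 (h : vchar) (N : int) :
  (forall mu : weight, N < mu.1 + mu.2 -> h mu = 0) ->
  (forall mu, fsmul rho2_alt h mu = 0) -> forall mu, h mu = 0.
Proof.
move=> h_supp h_ann.
suff h_below (n : nat) (mu : weight) : N < mu.1 + mu.2 + Posz n -> h mu = 0.
  by move=> mu; apply: (h_below (absz (N - (mu.1 + mu.2))%R).+1); lia.
elim: n mu => [|n IH] mu mu_n; first by apply: h_supp; lia.
have h_higher (t : weight) : t.1 + t.2 <= 1 -> h (mu + (2, 2) - t *+ 2) = 0.
  move=> t_le; apply: IH.
  by rewrite (_ : _ - _ = (mu.1 + 2 - t.1 *+ 2, mu.2 + 2 - t.2 *+ 2)) //=; lia.
have := h_ann (mu + (2, 2)).
rewrite /fsmul big_map /rho_alt !big_cons big_nil.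
rewrite [h (_ - (-1, 2) *+ 2)]h_higher // [h (_ - (2, -1) *+ 2)]h_higher //.
rewrite [h (_ - (-2, 1) *+ 2)]h_higher // [h (_ - (1, -2) *+ 2)]h_higher //.
rewrite [h (_ - (-1, -1) *+ 2)]h_higher // !mulr0 !addr0 mul1r.
by rewrite (_ : (1, 1) *+ 2 = (2, 2)) // addrK.
Qed.

(** * Alternating sums along root strings *)

Definition string_part (R : seq weight) (c d : weight) (k : nat) : vchar :=
  fun mu => \sum_(r <- R) alt (c - d *+ k + r) mu.

Section AdjointString.

Variables (R : seq weight) (c d : weight).
Hypothesis adj_split : perm_eq adj_weights (R ++ [seq r - d | r <- R]).

Lemma adj_alt_split k mu :
  adj_alt (c - d *+ k) mu = string_part R c d k mu + string_part R c d k.+1 mu.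
Proof.
rewrite /adj_alt (perm_big _ adj_split) big_cat big_map; congr (_ + _).
by apply: eq_bigr => r _; congr alt; rewrite mulrS; ring.
Qed.

Lemma adj_alt_string n mu :
  \sum_(k < n.+1) (-1) ^+ k * adj_alt (c - d *+ k) mu =
  string_part R c d 0 mu + (-1) ^+ n * string_part R c d n.+1 mu.
Proof.
elim: n => [|n IH]; first by rewrite big_ord_recr big_ord0 /= adj_alt_split; ring.
by rewrite big_ord_recr /= IH adj_alt_split exprS; ring.
Qed.

End AdjointString.

Definition adj_split1 : seq weight := [:: (1, 1); (0, 0); (2, -1); (1, -2)].
Definition adj_split2 : seq weight := [:: (1, 1); (0, 0); (-1, 2); (-2, 1)].

Lemma adj_weights_split1 :
  perm_eq adj_weights (adj_split1 ++ [seq r - (2, -1) | r <- adj_split1]).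
Proof. by vm_compute. Qed.

Lemma adj_weights_split2 :
  perm_eq adj_weights (adj_split2 ++ [seq r - (-1, 2) | r <- adj_split2]).
Proof. by vm_compute. Qed.

Lemma adj_split1_wall u mu : u.1 = -1 -> \sum_(r <- adj_split1) alt (u + r) mu = 0.
Proof.
case: u => _ y /= ->; rewrite /adj_split1 !big_cons big_nil.
rewrite [alt (_ + (1, 1)) _]alt_wall1 // [alt (_ + (1, -2)) _]alt_wall1 //.
have -> : (-1, y) + (2, -1) = s1 ((-1, y) + (0, 0)) by apply: weightP => /=; ring.
by rewrite alt_s1; ring.
Qed.

Lemma adj_split2_wall u mu : u.2 = -1 -> \sum_(r <- adj_split2) alt (u + r) mu = 0.
Proof.
case: u => x _ /= ->; rewrite /adj_split2 !big_cons big_nil.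
rewrite [alt (_ + (1, 1)) _]alt_wall2 // [alt (_ + (-2, 1)) _]alt_wall2 //.
have -> : (x, -1) + (-1, 2) = s2 ((x, -1) + (0, 0)) by apply: weightP => /=; ring.
by rewrite alt_s2; ring.
Qed.

Lemma adj_alt_alternating (n1 n2 : nat) mu (c := (2 * Posz n1 + 1, 2 * Posz n2 + 1)) :
  \sum_(k < n1.+1) (-1) ^+ k * adj_alt (c - (2, -1) *+ k) mu
  + \sum_(k < n2.+1) (-1) ^+ k * adj_alt (c - (-1, 2) *+ k) mu - adj_alt c mu
  = alt (c + (1, 1)) mu - alt (c - (1, 1)) mu.
Proof.
rewrite (adj_alt_string _ _ _ adj_weights_split1) (adj_alt_string _ _ _ adj_weights_split2).
rewrite {2 4}/string_part adj_split1_wall ?adj_split2_wall;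
  try by rewrite weight_natmul /=; lia.
rewrite /string_part /adj_alt /adj_split1 /adj_split2 !big_cons !big_nil !mulr0n !subr0.
by rewrite (_ : c + (-1, -1) = c - (1, 1)) //; ring.
Qed.

Lemma telescope_ord (F : nat -> int) n : \sum_(k < n) (F k.+1 - F k) = F n - F 0%N.
Proof. by rewrite -(big_mkord xpredT (fun k => F k.+1 - F k)) telescope_sumr. Qed.

Lemma alt_shells (m1 m2 : nat) mu :
  \sum_(l < (minn m1 m2).+1)
     (alt ((2 * Posz (m1 - l) + 1, 2 * Posz (m2 - l) + 1) + (1, 1)) mu
      - alt ((2 * Posz (m1 - l) + 1, 2 * Posz (m2 - l) + 1) - (1, 1)) mu)
  = alt ((Posz m1 + 1, Posz m2 + 1) *+ 2) mu.
Proof.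
pose F l := - alt ((Posz m1 - Posz l + 1, Posz m2 - Posz l + 1) *+ 2) mu.
rewrite (eq_bigr (fun l : 'I_ _ => F l.+1 - F l)) => [|l _]; last first.
  have := ltn_ord l; rewrite /F opprK [RHS]addrC => lt_l.
  by congr (alt _ _ - alt _ _); apply: weightP; rewrite weight_natmul /=; lia.
rewrite telescope_ord /F opprK !subr0.
by case: (leqP m1 m2) => m12; [rewrite alt_wall1 | rewrite alt_wall2];
  rewrite ?add0r // weight_natmul /=; lia.
Qed.

Definition psi2_rhs (m1 m2 : nat) : vchar := fun mu =>
    \sum_(l < (minn m1 m2).+1) \sum_(k < (m1 - l).+1)
        (-1) ^+ k * chV (2 * m1 - 2 * k - 2 * l)%N (2 * m2 + k - 2 * l)%N mu
  + \sum_(l < (minn m1 m2).+1) \sum_(k < (m2 - l).+1)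
        (-1) ^+ k * chV (2 * m1 + k - 2 * l)%N (2 * m2 - 2 * k - 2 * l)%N mu
  - \sum_(l < (minn m1 m2).+1) chV (2 * m1 - 2 * l)%N (2 * m2 - 2 * l)%N mu.

Lemma fsmul_rho2_psi2_rhs m1 m2 mu :
  fsmul rho2_alt (psi2_rhs m1 m2) mu = alt ((Posz m1 + 1, Posz m2 + 1) *+ 2) mu.
Proof.
rewrite /psi2_rhs fsmulB fsmulD !fsmul_sum -alt_shells -big_split -sumrB /=.
apply: eq_bigr => l _; have := ltn_ord l; rewrite ltnS leq_min => /andP [l1 l2].
rewrite -adj_alt_alternating !fsmul_sum fsmul_rho2_chV.
congr (_ + _ - adj_alt _ _); last by apply: weightP => /=; lia.
all: apply: eq_bigr => k _; have := ltn_ord k; rewrite ltnS => k_le.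
all: by rewrite fsmulZ fsmul_rho2_chV; congr (_ * adj_alt _ _);
  apply: weightP; rewrite weight_natmul /=; lia.
Qed.

Lemma psi2_rhs_supp m1 m2 (mu : weight) :
  2 * (Posz m1 + Posz m2) < mu.1 + mu.2 -> psi2_rhs m1 m2 mu = 0.
Proof.
move=> high; rewrite /psi2_rhs !big1 ?subrr // => l _; have := ltn_ord l.
- by rewrite chV_supp //; lia.
- by move=> lt_l; apply: big1 => k _; have lt_k := ltn_ord k; rewrite chV_supp ?mulr0 //; lia.
- by move=> lt_l; apply: big1 => k _; have lt_k := ltn_ord k; rewrite chV_supp ?mulr0 //; lia.
Qed.

Theorem theorem2 (m1 m2 : nat) (mu : int * int) :
  psi2 (chV m1 m2) mu =
    \sum_(l < (minn m1 m2).+1) \sum_(k < (m1 - l).+1)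
        (-1) ^+ k * chV (2 * m1 - 2 * k - 2 * l)%N (2 * m2 + k - 2 * l)%N mu
  + \sum_(l < (minn m1 m2).+1) \sum_(k < (m2 - l).+1)
        (-1) ^+ k * chV (2 * m1 + k - 2 * l)%N (2 * m2 - 2 * k - 2 * l)%N mu
  - \sum_(l < (minn m1 m2).+1) chV (2 * m1 - 2 * l)%N (2 * m2 - 2 * l)%N mu.
Proof.
apply/eqP; rewrite -subr_eq0 -/(psi2_rhs m1 m2 mu); apply/eqP; move: mu.
apply: (@fsmul_rho2_eq0 _ (2 * (Posz m1 + Posz m2))) => [mu high | mu].
  rewrite (psi2_supp _ (Posz m1 + Posz m2)) ?psi2_rhs_supp ?subr0 //.
  by move=> nu; apply: chV_supp.
by rewrite fsmulB fsmul_rho2_psi2_chV fsmul_rho2_psi2_rhs subrr.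
Qed.
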